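(* Let $R$ be a commutative ring in which $2$ is invertible and $n\ge3$. Equip $R^{2n+1}$ with the standard form of matrix $\tilde\phi_{2n+1}=(2)\perp\widetilde{\psi}_n$. Let $u=(0,u_1',u_1'',u_2',u_2'',\dots,u_n',u_n'')\in R^{2n+1}$ be an isotropic unimodular vector and $v=(0,v_1',v_1'',\dots,v_n',v_n'')\in R^{2n+1}$ with $\langle u,v\rangle=0$. Then $\sigma_{u,v}\in\mathrm{EO}_{2n+1}(R)$.
   Context: $e_{i,j}$ are matrix units and $\widetilde{\psi}_s=\sum_{i=1}^s(e_{2i-1,2i}+e_{2i,2i-1})$. On $R^{2n+1}$ with coordinates $(a_1,a_1',a_1'',\dots,a_n',a_n'')$ the bilinear form is $\langle a,b\rangle=a^t\tilde\phi_{2n+1}b=2a_1b_1+\sum_i(a_i'b_i''+a_i''b_i')$ and the quadratic form is $q(a)=\tfrac12\langle a,a\rangle=a_1^2+\sum_ia_i'a_i''$. For $u,v$ with $u$ unimodular, $q(u)=0$, $\langle u,v\rangle=0$ and $r=q(v)$, the Eichler–Siegel–Dickson transvection is $\sigma_{u,v}(x)=x+\langle v,x\rangle u-\langle u,x\rangle v-r\langle u,x\rangle u$. Odd elementary orthogonal group: for $N=2s+1$ and $1\le i\le s$, $\lambda\in R$, $F^1_i(\lambda)=I_N+\lambda(e_{1,2i+1}-2e_{2i,1}-\lambda e_{2i,2i+1})$, $F^2_i(\lambda)=I_N+\lambda(e_{1,2i}-2e_{2i+1,1}-\lambda e_{2i+1,2i})$; $\mathrm{EO}_{2s+1}(R)$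 is the group they generate. *)

From HB Require Import structures.
From mathcomp Require Import all_boot all_order all_algebra.
Set Implicit Arguments. Unset Strict Implicit. Unset Printing Implicit Defensive.
Import GRing.Theory.
Local Open Scope ring_scope.

(* Coordinates of R^(2s+1) are indexed 0..2s (0-based).
   Index 0 is a_1, index 2i-1 is a_i', index 2i is a_i'' (1 <= i <= s).
   A 1-based matrix unit e_{j,k} is delta_mx (j-1) (k-1). *)

Section Defs.
Variable R : comUnitRingType.
Variable s : nat.
Notation N := (s.*2.+1).

Definition ix (k : nat) : 'I_N := inord k.

Definition phi_tilde : 'M[R]_N :=
  \matrix_(j, k)
    if (j == 0%N :> nat) && (k == 0%N :> nat) then 2%:R
    else if (0 < j)%N && (0 < k)%N &&
            (((odd j) && (k == j.+1 :> nat)) || ((odd k) && (j == k.+1 :> nat)))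
         then 1 else 0.

Definition bform (a b : 'cV[R]_N) : R := (a^T *m phi_tilde *m b) ord0 ord0.

Definition qform (a : 'cV[R]_N) : R :=
  a (ix 0) ord0 ^+ 2 +
  \sum_(i < s) a (ix i.*2.+1) ord0 * a (ix i.*2.+2) ord0.

Definition unimodular (a : 'cV[R]_N) : Prop :=
  exists w : 'cV[R]_N, \sum_(k < N) w k ord0 * a k ord0 = 1.

(* Eichler--Siegel--Dickson transvection, as the matrix of
   x |-> x + <v,x> u - <u,x> v - r <u,x> u,  r = q(v). *)
Definition esd (u v : 'cV[R]_N) : 'M[R]_N :=
  1%:M + u *m (v^T *m phi_tilde) - v *m (u^T *m phi_tilde)
       - qform v *: (u *m (u^T *m phi_tilde)).

(* generators, for i : 'I_s standing for the 1-based index i+1 *)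
Definition emx (j k : nat) : 'M[R]_N := delta_mx (ix j) (ix k).

(* F^1_i(l) = I + l (e_{1,2i+1} - 2 e_{2i,1} - l e_{2i,2i+1}) *)
Definition F1 (i : 'I_s) (l : R) : 'M[R]_N :=
  1%:M + l *: (emx 0 i.*2.+2 - 2%:R *: emx i.*2.+1 0 - l *: emx i.*2.+1 i.*2.+2).
(* F^2_i(l) = I + l (e_{1,2i} - 2 e_{2i+1,1} - l e_{2i+1,2i}) *)
Definition F2 (i : 'I_s) (l : R) : 'M[R]_N :=
  1%:M + l *: (emx 0 i.*2.+1 - 2%:R *: emx i.*2.+2 0 - l *: emx i.*2.+2 i.*2.+1).

Definition EO_gen (g : 'M[R]_N) : Prop :=
  exists i l, g = F1 i l \/ g = F2 i l.

Inductive in_EO : 'M[R]_N -> Prop :=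
| EO_one : in_EO 1%:M
| EO_mul g A : EO_gen g -> in_EO A -> in_EO (g *m A)
| EO_mulV g A : EO_gen g -> in_EO A -> in_EO (invmx g *m A).

End Defs.

From HB Require Import structures.
From mathcomp Require Import all_boot all_order all_algebra.
From mathcomp Require Import ring zify.
Set Implicit Arguments. Unset Strict Implicit. Unset Printing Implicit Defensive.
Import GRing.Theory.
Local Open Scope ring_scope.

(* Write E_k for the standard basis, indexed from 0: E_0 is anisotropic with
   <E_0, E_0> = 2, and the other E_k split into hyperbolic pairs (E_k, E_k'), where
   k' = partner k.  The generators F^1_i(l), F^2_i(l) are exactly the transvections
   sigma_{E_k, -l E_0}, and sigma_{u,v} is additive in v; commutators through E_0 then
   give every sigma_{E_a, c E_b} with b <> a'.  Call x an EO-direction for u when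
   <u, x> = 0 and all sigma_{u, c x} lie in EO; these form a submodule.  Exchanging the
   arguments with sigma_{u,v} sigma_{v,u} = 1, the vectors <u, E_k> E_a - <u, E_a> E_k
   (k <> a, a') are EO-directions for u: u splits into a part handled coordinate by
   coordinate and a part in span(E_a', E_k') handled by a commutator through a third
   hyperbolic pair, which exists because n >= 3.  Unimodularity of u gives w with
   <u, w> = 1; it yields the missing case k = a' through the three-term relation between
   these vectors, and writes every v orthogonal to u with vanishing E_0-coordinate as a
   combination of them. *)

Lemma sum_ord_double (V : nmodType) (G : nat -> V) m :
  \sum_(i < m.*2) G i = \sum_(i < m) (G i.*2 + G i.*2.+1).
Proof.
elim: m => [|m IH]; first by rewrite !big_ord0.
by rewrite doubleS !big_ord_recr /= IH addrA.
Qed.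

Lemma eq_mx_mulcV (R : pzRingType) m n (A B : 'M[R]_(m, n)) :
  (forall x : 'cV[R]_n, A *m x = B *m x) -> A = B.
Proof.
move=> eqAB; apply/matrixP => i j.
by have /matrixP/(_ i ord0) := eqAB (delta_mx j ord0); rewrite -!colE !mxE.
Qed.

Lemma mulmx_mx11 (R : comPzRingType) m (u : 'cV[R]_m) (a : 'M[R]_1) :
  u *m a = a ord0 ord0 *: u.
Proof. by rewrite [in LHS](mx11_scalar a) mul_mx_scalar. Qed.

Lemma mul_delta_mx_cV (R : comPzRingType) m n (i : 'I_m) (j : 'I_n)
    (x : 'cV[R]_n) :
  delta_mx i j *m x = x j ord0 *: delta_mx i ord0.
Proof.
apply/matrixP => k l; rewrite !mxE (bigD1 j) //= big1 => [|j' /negbTE j'_neq].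
  by rewrite !mxE eqxx (ord1 l) !andbT addr0 mulrC.
by rewrite !mxE j'_neq andbF mul0r.
Qed.

Section StandardForm.
Variables (R : comUnitRingType) (n : nat).
Local Notation N := n.*2.+1.
Local Notation V := 'cV[R]_N.
Local Notation phi := (phi_tilde R n).

(* Coordinate 0 is its own partner, through the truncated predecessor 0.-1 = 0. *)
Definition partner_nat (k : nat) : nat := if odd k then k.+1 else k.-1.

Lemma partner_nat_lt k : (k < N)%N -> (partner_nat k < N)%N.
Proof. by rewrite /partner_nat; case: ifP; lia. Qed.

Definition partner (k : 'I_N) : 'I_N := Ordinal (partner_nat_lt (ltn_ord k)).

Lemma partnerK : involutive partner.
Proof.
move=> k; apply: val_inj => /=; rewrite /partner_nat.
by case: k => -[|k] //= _; case ok: (odd k); rewrite /= ?ok.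
Qed.

Lemma partner_eq0 k : (partner k == ord0) = (k == ord0).
Proof.
rewrite -!val_eqE; case: k => -[|k] //= _.
by rewrite /partner_nat /=; case: ifP => //; case: k.
Qed.

Lemma partner0 : partner ord0 = ord0.
Proof. by apply/eqP; rewrite partner_eq0. Qed.

Lemma eq_partner j k : (j == partner k) = (partner j == k).
Proof. by rewrite -(inj_eq (can_inj partnerK)) partnerK. Qed.

Lemma partner_neq k : k != ord0 -> partner k != k.
Proof.
by rewrite -!val_eqE /= /partner_nat => /eqP k_neq0; case: ifP => _; apply/eqP; lia.
Qed.

Definition bvec (k : 'I_N) : V := delta_mx k ord0.

Lemma phi_tildeE j k :
  phi j k = (k == partner j)%:R * (if j == ord0 then 2%:R else 1).
Proof.
rewrite mxE -!val_eqE /=.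
case: j k => [j _] [k _] /=; case: (posnP j) => [-> | j_gt0].
  by case: k => [|k]; rewrite /= ?mul1r ?mul0r.
rewrite mulr1 /=; set b := _ && _; suff -> : b = (k == partner_nat j) by case: eqP.
by rewrite /b /partner_nat; case: ifP => oj; apply/idP/idP; lia.
Qed.

Lemma phi_tilde_sym : phi^T = phi.
Proof.
apply/matrixP => j k; rewrite mxE !phi_tildeE eq_partner eq_sym.
by case: eqP => [->|_]; rewrite ?partner_eq0 ?mul0r.
Qed.

Lemma bform_sym (a b : V) : bform a b = bform b a.
Proof.
rewrite /bform; transitivity ((a^T *m phi *m b)^T ord0 ord0); first by rewrite [RHS]mxE.
by rewrite !trmx_mul trmxK phi_tilde_sym mulmxA.
Qed.

Lemma bformDl (a b c : V) : bform (a + b) c = bform a c + bform b c.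
Proof. by rewrite /bform linearD /= !mulmxDl mxE. Qed.
Lemma bformZl k (a c : V) : bform (k *: a) c = k * bform a c.
Proof. by rewrite /bform linearZ /= -!scalemxAl mxE. Qed.
Lemma bformNl (a c : V) : bform (- a) c = - bform a c.
Proof. by rewrite -scaleN1r bformZl mulN1r. Qed.
Lemma bformBl (a b c : V) : bform (a - b) c = bform a c - bform b c.
Proof. by rewrite bformDl bformNl. Qed.
Lemma bform0l (c : V) : bform 0 c = 0.
Proof. by rewrite -(scale0r 0) bformZl mul0r. Qed.

Lemma bformDr (a b c : V) : bform c (a + b) = bform c a + bform c b.
Proof. by rewrite !(bform_sym c) bformDl. Qed.
Lemma bformZr k (a c : V) : bform c (k *: a) = k * bform c a.
Proof. by rewrite !(bform_sym c) bformZl. Qed.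
Lemma bformNr (a c : V) : bform c (- a) = - bform c a.
Proof. by rewrite !(bform_sym c) bformNl. Qed.
Lemma bformBr (a b c : V) : bform c (a - b) = bform c a - bform c b.
Proof. by rewrite !(bform_sym c) bformBl. Qed.
Lemma bform0r (c : V) : bform c 0 = 0.
Proof. by rewrite bform_sym bform0l. Qed.

Lemma bform_sumr I (r : seq I) (P : pred I) (F : I -> V) (c : V) :
  bform c (\sum_(i <- r | P i) F i) = \sum_(i <- r | P i) bform c (F i).
Proof. exact: (big_morph _ (fun a b => bformDr a b c) (bform0r c)). Qed.

Lemma cV_sum_bvec (x : V) : x = \sum_k x k ord0 *: bvec k.
Proof.
by rewrite {1}(matrix_sum_delta x); apply: eq_bigr => k _; rewrite big_ord1.
Qed.

Lemma bform_cV_sum (x y : V) : bform x y = \sum_k y k ord0 * bform x (bvec k).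
Proof.
by rewrite {1}(cV_sum_bvec y) bform_sumr; apply: eq_bigr => k _; rewrite bformZr.
Qed.

Lemma bvecE (j k : 'I_N) : bvec j k ord0 = (k == j)%:R.
Proof. by rewrite mxE eqxx andbT. Qed.

Lemma bform_bvecl j (x : V) :
  bform (bvec j) x = (if j == ord0 then 2%:R else 1) * x (partner j) ord0.
Proof.
rewrite /bform trmx_delta -rowE mxE (bigD1 (partner j)) //= big1 => [|k k_neq].
  by rewrite mxE phi_tildeE eqxx mul1r addr0.
by rewrite mxE phi_tildeE (negbTE k_neq) mul0r mul0r.
Qed.

Lemma bform_bvecl_neq0 j (x : V) : j != ord0 -> bform (bvec j) x = x (partner j) ord0.
Proof. by move=> j_neq0; rewrite bform_bvecl (negbTE j_neq0) mul1r. Qed.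

Lemma bform_bvec j k :
  bform (bvec j) (bvec k) = (k == partner j)%:R * (if j == ord0 then 2%:R else 1).
Proof. by rewrite bform_bvecl bvecE mulrC [k == _]eq_sym. Qed.

Lemma bform_bvec_partner j : j != ord0 -> bform (bvec j) (bvec (partner j)) = 1.
Proof. by move=> j_neq0; rewrite bform_bvec eqxx (negbTE j_neq0) mulr1. Qed.

Lemma bform_bvec_eq0 j k : k != partner j -> bform (bvec j) (bvec k) = 0.
Proof. by move=> k_neq; rewrite bform_bvec (negbTE k_neq) mul0r. Qed.

Lemma bform_bvec00 : bform (bvec ord0) (bvec ord0) = 2%:R.
Proof. by rewrite bform_bvec partner0 eqxx mul1r. Qed.

Lemma bvec_isotropic j : j != ord0 -> bform (bvec j) (bvec j) = 0.
Proof. by move=> j_neq0; rewrite bform_bvec_eq0 // eq_sym partner_neq. Qed.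

Lemma bform_bvec_ord0 j : j != ord0 -> bform (bvec j) (bvec ord0) = 0.
Proof. by move=> j_neq0; rewrite bform_bvec_eq0 // eq_sym partner_eq0. Qed.

Lemma bform_qform (x : V) : bform x x = 2%:R * qform x.
Proof.
pose c m := x (ix n m) ord0.
pose f m := c m * c (partner_nat m) * (if m == 0%N then 2%:R else 1).
have cE (k : 'I_N) : x k ord0 = c k by rewrite /c /ix inord_val.
rewrite {1}(cV_sum_bvec x) bform_sym bform_sumr.
rewrite (eq_bigr (f \o val)); last first.
  move=> k _; rewrite bformZr bform_sym bform_bvecl -val_eqE !cE /f /=; ring.
rewrite -(big_mkord xpredT f) big_ltn // big_add1 big_mkord.
rewrite (sum_ord_double (fun m => f m.+1)).
rewrite /qform mulrDr mulr_sumr; congr (_ + _); first by rewrite /f /c /=; ring.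
by apply: eq_bigr => i _; rewrite /f /partner_nat /= odd_double /c /=; ring.
Qed.

Lemma unimodular_dual (u : V) : u ord0 ord0 = 0 -> unimodular u ->
  exists2 w : V, bform u w = 1 & w ord0 ord0 = 0.
Proof.
move=> u0 [w' w'u]; exists (\sum_(k | k != ord0) w' k ord0 *: bvec (partner k)).
  rewrite bform_sumr -w'u [RHS](bigD1 ord0) //= u0 mulr0 add0r.
  apply: eq_bigr => k k_neq0; rewrite bformZr bform_sym bform_bvecl_neq0 ?partnerK //.
  by rewrite partner_eq0.
rewrite summxE big1 // => k k_neq0; rewrite mxE bvecE eq_sym partner_eq0.
by rewrite (negbTE k_neq0) mulr0.
Qed.

End StandardForm.

Section Transvections.
Variables (R : comUnitRingType) (n : nat).
Local Notation N := n.*2.+1.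
Local Notation V := 'cV[R]_N.
Hypothesis unit2 : (2%:R : R) \is a GRing.unit.

Lemma qformD (v w : V) : qform (v + w) = qform v + qform w + bform v w.
Proof.
apply: (mulrI unit2); rewrite -bform_qform.
rewrite [RHS](_ : _ = 2%:R * qform v + 2%:R * qform w + 2%:R * bform v w); last by ring.
by rewrite -!bform_qform bformDl !bformDr (bform_sym w v); ring.
Qed.

Lemma qformZ c (v : V) : qform (c *: v) = c ^+ 2 * qform v.
Proof.
apply: (mulrI unit2); rewrite -bform_qform mulrCA -bform_qform.
by rewrite bformZl bformZr mulrA -expr2.
Qed.

Lemma qformN (v : V) : qform (- v) = qform v.
Proof. by rewrite -scaleN1r qformZ sqrrN expr1n mul1r. Qed.

Lemma qformB (v w : V) : qform (v - w) = qform v + qform w - bform v w.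
Proof. by rewrite qformD qformN bformNr. Qed.

Lemma qform0 : qform (0 : V) = 0.
Proof. by rewrite -(scale0r 0) qformZ expr0n mul0r. Qed.

Lemma isotropic_qform (v : V) : bform v v = 0 -> qform v = 0.
Proof. by move=> vv0; apply: (mulrI unit2); rewrite -bform_qform vv0 mulr0. Qed.

Lemma esd_apply (u v x : V) : esd u v *m x =
  x + bform v x *: u - bform u x *: v - (qform v * bform u x) *: u.
Proof.
rewrite /esd /bform !mulmxBl !mulmxDl mul1mx -!scalemxAl -!mulmxA !mulmx_mx11.
by rewrite !scalerA !mulmxA.
Qed.

Ltac expand_forms := rewrite ?(bformDl, bformDr, bformZl, bformZr, bformNl,
  bformNr, bformBl, bformBr, qformD, qformZ, qformN, qformB, bform0l, bform0r,
  qform0).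

Ltac use_form_hyps := repeat match goal with
  | H : bform ?a ?b = _ |- _ => rewrite ?(bform_sym b a) ?H; clear H
  | H : qform _ = _ |- _ => rewrite ?H; clear H
  end.

Ltac esd_ring := apply: eq_mx_mulcV => x; rewrite -?mulmxA ?mul1mx !esd_apply;
  expand_forms; use_form_hyps; apply/matrixP => ? ?; rewrite !mxE; ring.

Lemma esd0 (u : V) : esd u 0 = 1%:M.
Proof. by esd_ring. Qed.

Lemma esdD (u v w : V) : bform u u = 0 -> bform u v = 0 -> bform u w = 0 ->
  esd u (v + w) = esd u v *m esd u w.
Proof. by move=> uu uv uw; have vw := bform_sym v w; esd_ring. Qed.

Lemma esd_self (u : V) c : bform u u = 0 -> esd u (c *: u) = 1%:M.
Proof. by move=> uu; have uq := isotropic_qform uu; esd_ring. Qed.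

Lemma esd_swap (u v : V) : bform u u = 0 -> bform v v = 0 -> bform u v = 0 ->
  esd u v *m esd v u = 1%:M.
Proof.
move=> uu vv uv; have uq := isotropic_qform uu; have vq := isotropic_qform vv.
by esd_ring.
Qed.

Lemma esdZ_swap c (u v : V) : bform u u = 0 -> bform v v = 0 -> bform u v = 0 ->
  esd (c *: u) v = esd u (c *: v).
Proof. by move=> uu vv uv; have vq := isotropic_qform vv; esd_ring. Qed.

Lemma esd_commutator (t s f g : V) :
  bform t t = 0 -> bform s s = 0 -> bform f f = 0 -> bform g g = 0 ->
  bform f g = 1 -> bform t g = 0 -> bform f s = 0 -> bform t f = 0 ->
  bform g s = 0 -> bform t s = 0 ->
  esd t s = esd t f *m esd g s *m esd t (- f) *m esd g (- s).
Proof.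
move=> tt ss ff gg fg tg fs tf gs ts.
by have sq := isotropic_qform ss; have fq := isotropic_qform ff; esd_ring.
Qed.

Lemma esd_commutator_anisotropic (u1 u2 e : V) a b :
  bform u1 u1 = 0 -> bform u2 u2 = 0 -> bform u1 u2 = 0 ->
  bform u1 e = 0 -> bform u2 e = 0 -> bform e e = 2%:R ->
  esd u1 ((- (2%:R * a * b)) *: u2) =
  esd u1 (a *: e) *m esd u2 (b *: e) *m esd u1 (- (a *: e)) *m esd u2 (- (b *: e)).
Proof.
move=> u1u1 u2u2 u1u2 u1e u2e ee.
have eq : qform e = 1 by apply: (mulrI unit2); rewrite -bform_qform ee mulr1.
by have u2q := isotropic_qform u2u2; esd_ring.
Qed.

End Transvections.

Section ElementaryGroup.
Variables (R : comUnitRingType) (n : nat).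
Local Notation N := n.*2.+1.
Local Notation V := 'cV[R]_N.
Local Notation bvec := (@bvec R n).
Hypothesis unit2 : (2%:R : R) \is a GRing.unit.

Lemma in_EO_mul (A B : 'M[R]_N) : in_EO A -> in_EO B -> in_EO (A *m B).
Proof.
elim=> [|g A' gen_g _ IH|g A' gen_g _ IH] EO_B; first by rewrite mul1mx.
  by rewrite -mulmxA; apply: EO_mul => //; apply: IH.
by rewrite -mulmxA; apply: EO_mulV => //; apply: IH.
Qed.

Lemma in_EO_gen (g : 'M[R]_N) : EO_gen g -> in_EO g.
Proof. by move=> gen_g; rewrite -[g]mulmx1; apply: EO_mul => //; apply: EO_one. Qed.

Lemma in_EO_genV (g : 'M[R]_N) : EO_gen g -> in_EO (invmx g).
Proof.
by move=> gen_g; rewrite -[invmx g]mulmx1; apply: EO_mulV => //; apply: EO_one.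
Qed.

Lemma ix0 : ix n 0 = ord0.
Proof. by apply: val_inj; rewrite /= inordK. Qed.

Lemma ix_neq0 k : (0 < k < N)%N -> ix n k != ord0.
Proof. by case/andP=> k_gt0 k_lt; rewrite -val_eqE /= inordK // -lt0n. Qed.

Lemma qform_bvec0 : qform (bvec ord0) = 1.
Proof. by apply: (mulrI unit2); rewrite -bform_qform bform_bvec00 mulr1. Qed.

Lemma esd_bvec_ord0 a l : a != ord0 ->
  esd (bvec a) ((- l) *: bvec ord0) = 1%:M + l *: (delta_mx ord0 (partner a)
    - 2%:R *: delta_mx a ord0 - l *: delta_mx a (partner a)).
Proof.
move=> a_neq0; apply: eq_mx_mulcV => x.
rewrite esd_apply mulmxDl mul1mx -scalemxAl !mulmxBl -!scalemxAl !mul_delta_mx_cV.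
rewrite qformZ // qform_bvec0 bformZl bform_bvecl eqxx bform_bvecl_neq0 //.
by rewrite partner0; apply/matrixP => ? ?; rewrite !mxE; ring.
Qed.

Lemma F1_esd (i : 'I_n) l : F1 i l = esd (bvec (ix n i.*2.+1)) ((- l) *: bvec ord0).
Proof.
have i_lt := ltn_ord i.
have a_neq0 : ix n i.*2.+1 != ord0 by apply: ix_neq0; lia.
have a_partner : partner (ix n i.*2.+1) = ix n i.*2.+2.
  by apply: val_inj; rewrite /= !inordK /partner_nat /= ?odd_double //; lia.
by rewrite esd_bvec_ord0 // a_partner /F1 /emx ix0.
Qed.

Lemma F2_esd (i : 'I_n) l : F2 i l = esd (bvec (ix n i.*2.+2)) ((- l) *: bvec ord0).
Proof.
have i_lt := ltn_ord i.
have a_neq0 : ix n i.*2.+2 != ord0 by apply: ix_neq0; lia.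
have a_partner : partner (ix n i.*2.+2) = ix n i.*2.+1.
  by apply: val_inj; rewrite /= !inordK /partner_nat /= ?odd_double //; lia.
by rewrite esd_bvec_ord0 // a_partner /F2 /emx ix0.
Qed.

Lemma EO_gen_esd a l : a != ord0 -> EO_gen (esd (bvec a) (l *: bvec ord0)).
Proof.
move=> a_neq0; have a_lt := ltn_ord a; have a_gt0 : (0 < a)%N by rewrite lt0n.
have i_lt : ((a.-1)./2 < n)%N by lia.
exists (Ordinal i_lt), (- l); rewrite F1_esd F2_esd opprK.
have [oa|ea] := boolP (odd a); [left | right];
  by rewrite (_ : ix n _ = a) //; apply: val_inj; rewrite /= inordK; lia.
Qed.

Lemma esd_unitmx (u v : V) : bform u u = 0 -> bform u v = 0 -> esd u v \in unitmx.
Proof.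
move=> uu uv; apply: (proj1 (@mulmx1_unit _ _ _ (esd u (- v)) _)).
by rewrite -esdD ?subrr ?esd0 // bformNr uv oppr0.
Qed.

Lemma EO_gen_unitmx (g : 'M[R]_N) : EO_gen g -> g \in unitmx.
Proof.
case=> i [l [->|->]]; rewrite ?F1_esd ?F2_esd; apply: esd_unitmx;
  rewrite ?bformZr ?bvec_isotropic ?bform_bvec_ord0 ?mulr0 // ix_neq0 //;
  by have := ltn_ord i; lia.
Qed.

Lemma in_EO_linv (A B : 'M[R]_N) : in_EO A -> B *m A = 1%:M -> in_EO B.
Proof.
move=> EO_A; elim: EO_A B => [|g A' gen_g _ IH|g A' gen_g _ IH] B.
- by rewrite mulmx1 => ->; apply: EO_one.
- rewrite mulmxA => /IH EO_Bg; have g_unit := EO_gen_unitmx gen_g.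
  by rewrite -(mulmxK g_unit B); apply: in_EO_mul => //; apply: in_EO_genV.
- rewrite mulmxA => /IH EO_Bg; have g_unit := EO_gen_unitmx gen_g.
  by rewrite -(mulmxKV g_unit B); apply: in_EO_mul => //; apply: in_EO_gen.
Qed.

Lemma in_EO_esd_swap (u v : V) : bform u u = 0 -> bform v v = 0 -> bform u v = 0 ->
  in_EO (esd v u) -> in_EO (esd u v).
Proof. by move=> uu vv uv EO_vu; apply: in_EO_linv EO_vu (esd_swap unit2 uu vv uv). Qed.

End ElementaryGroup.

Section Generation.
Variables (R : comUnitRingType) (n : nat).
Local Notation N := n.*2.+1.
Local Notation V := 'cV[R]_N.
Local Notation bvec := (@bvec R n).
Hypothesis unit2 : (2%:R : R) \is a GRing.unit.

Definition eo_dir (u x : V) : Prop :=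
  bform u x = 0 /\ forall c, in_EO (esd u (c *: x)).

Lemma eo_dir0 (u : V) : eo_dir u 0.
Proof. by split=> [|c]; rewrite ?bform0r // scaler0 esd0 //; apply: EO_one. Qed.

Lemma eo_dirZ (u x : V) c : eo_dir u x -> eo_dir u (c *: x).
Proof. by case=> ux EO_x; split=> [|d]; rewrite ?bformZr ?ux ?mulr0 // scalerA. Qed.

Lemma eo_dirN (u x : V) : eo_dir u x -> eo_dir u (- x).
Proof. by rewrite -scaleN1r; apply: eo_dirZ. Qed.

Lemma eo_dirD (u x y : V) : bform u u = 0 ->
  eo_dir u x -> eo_dir u y -> eo_dir u (x + y).
Proof.
move=> uu [ux EO_x] [uy EO_y]; split=> [|c]; first by rewrite bformDr ux uy addr0.
by rewrite scalerDr esdD // ?bformZr ?ux ?uy ?mulr0 //; apply: in_EO_mul.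
Qed.

Lemma eo_dir_sum (u : V) I (r : seq I) (P : pred I) (F : I -> V) :
  bform u u = 0 -> (forall i, P i -> eo_dir u (F i)) ->
  eo_dir u (\sum_(i <- r | P i) F i).
Proof.
by move=> uu EO_F; apply: big_ind => //; [apply: eo_dir0 | move=> x y; apply: eo_dirD].
Qed.

Lemma eo_dir_coord (u y : V) : bform u u = 0 ->
  (forall j, y j ord0 = 0 \/ eo_dir u (bvec j)) -> eo_dir u y.
Proof.
move=> uu EO_y; rewrite (cV_sum_bvec y); apply: eo_dir_sum => // j _.
by case: (EO_y j) => [->|]; [rewrite scale0r; apply: eo_dir0 | apply: eo_dirZ].
Qed.

Lemma eo_dir_in_EO (u x : V) : eo_dir u x -> in_EO (esd u x).
Proof. by case=> _ /(_ 1); rewrite scale1r. Qed.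

Lemma eo_dir_self (u : V) : bform u u = 0 -> eo_dir u u.
Proof. by move=> uu; split=> // c; rewrite esd_self //; apply: EO_one. Qed.

Lemma eo_dir_bvec_ord0 a : a != ord0 -> eo_dir (bvec a) (bvec ord0).
Proof.
move=> a_neq0; split=> [|c]; first exact: bform_bvec_ord0.
by apply/in_EO_gen/EO_gen_esd.
Qed.

(* A commutator of two generators, taken through the anisotropic vector E_0. *)
Lemma eo_dir_bvec a b : a != ord0 -> b != ord0 -> b != partner a ->
  eo_dir (bvec a) (bvec b).
Proof.
move=> a_neq0 b_neq0 b_neq; split=> [|c]; first exact: bform_bvec_eq0.
have -> : c = - (2%:R * 1 * (- (c / 2%:R))) by rewrite mulr1 mulrN opprK mulrC divrK.
rewrite (esd_commutator_anisotropic unit2 (e := bvec ord0)) -?scaleNr;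
  rewrite ?bform_bvec00 ?bform_bvec_ord0 ?bvec_isotropic ?bform_bvec_eq0 //.
have EO_a := (eo_dir_bvec_ord0 a_neq0).2; have EO_b := (eo_dir_bvec_ord0 b_neq0).2.
by do ![apply: in_EO_mul | apply: EO_a | apply: EO_b].
Qed.

Lemma eo_dir_bvecl k (y : V) : k != ord0 ->
  y ord0 ord0 = 0 -> y (partner k) ord0 = 0 -> eo_dir (bvec k) y.
Proof.
move=> k_neq0 y0 yk; apply: eo_dir_coord; first exact: bvec_isotropic.
move=> j; have [->|j_neq0] := eqVneq j ord0; first by left.
have [->|j_neq] := eqVneq j (partner k); first by left.
by right; apply: eo_dir_bvec.
Qed.

Lemma eo_dir_bvecr (y : V) k : k != ord0 -> bform y y = 0 ->
  y ord0 ord0 = 0 -> y (partner k) ord0 = 0 -> eo_dir y (bvec k).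
Proof.
move=> k_neq0 yy y0 yk; have ky : bform (bvec k) y = 0 by rewrite bform_bvecl_neq0.
split=> [|c]; first by rewrite bform_sym.
have kk : bform (bvec k) (bvec k) = 0 by rewrite bvec_isotropic.
apply: in_EO_esd_swap => //; rewrite ?bformZl ?bformZr ?kk ?(bform_sym y) ?ky ?mulr0 //.
by rewrite esdZ_swap //; apply: (eo_dir_bvecl k_neq0 y0 yk).2.
Qed.

Definition bvec2 (a b : 'I_N) (al be : R) : V := al *: bvec a + be *: bvec b.

Lemma bvec2E a b al be j : bvec2 a b al be j ord0 = al * (j == a)%:R + be * (j == b)%:R.
Proof. by rewrite !mxE !eqxx !andbT. Qed.

Lemma bvec2_eq0 a b al be j : j != a -> j != b -> bvec2 a b al be j ord0 = 0.
Proof. by move=> /negbTE ja /negbTE jb; rewrite bvec2E ja jb !mulr0 addr0. Qed.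

Lemma bvec2_isotropic a b al be : a != ord0 -> b != ord0 -> b != partner a ->
  bform (bvec2 a b al be) (bvec2 a b al be) = 0.
Proof.
move=> a_neq0 b_neq0 b_neq; have a_neq : a != partner b by rewrite eq_partner eq_sym.
rewrite /bvec2 !(bformDl, bformDr, bformZl, bformZr) !bvec_isotropic //.
by rewrite !bform_bvec_eq0 //; ring.
Qed.

(* Each pair {k, partner k} has exactly one odd member, so one of 1, 3, 5 is free. *)
Lemma exists_free_index (a b : 'I_N) : (3 <= n)%N ->
  exists r : 'I_N, [/\ r != ord0, r != a, r != b, r != partner a & r != partner b].
Proof.
move=> n_ge3; have /hasP[m m_in /and4P[ma mb mpa mpb]] : has (fun m : nat =>
    [&& m != a, m != b, m != partner_nat a & m != partner_nat b]%N) [:: 1; 3; 5]%N.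
  by rewrite /= /partner_nat; case: ifP => oa; case: ifP => ob; lia.
have /andP[m_gt0 m_lt] : (0 < m < N)%N.
  by move: m_in; rewrite !inE => /or3P[] /eqP->; lia.
by exists (Ordinal m_lt); split; rewrite -val_eqE //= -lt0n.
Qed.

Section PairVectors.
Variables (a b : 'I_N) (al be : R).
Hypotheses (n_ge3 : (3 <= n)%N) (a_neq0 : a != ord0) (b_neq0 : b != ord0).
Hypotheses (b_neq_a : b != a) (b_neq : b != partner a).
Local Notation t := (bvec2 a b al be).

Let t_isotropic : bform t t = 0 := bvec2_isotropic al be a_neq0 b_neq0 b_neq.

Let t_ord0 : t ord0 ord0 = 0.
Proof. by rewrite bvec2_eq0 // eq_sym. Qed.

(* A commutator through a hyperbolic pair (E_r, E_r') orthogonal to both arguments. *)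
Lemma esd_bvec2_partner_EO ga de :
  bform t (bvec2 (partner a) (partner b) ga de) = 0 ->
  in_EO (esd t (bvec2 (partner a) (partner b) ga de)).
Proof.
set s := bvec2 _ _ ga de => ts.
have [r [r_neq0 r_a r_b r_pa r_pb]] := exists_free_index a b n_ge3.
have pr_neq0 : partner r != ord0 by rewrite partner_eq0.
have pr_a : partner r != a by rewrite -eq_partner.
have pr_b : partner r != b by rewrite -eq_partner.
have pr_pa : partner r != partner a by rewrite -eq_partner partnerK.
have pr_pb : partner r != partner b by rewrite -eq_partner partnerK.
have ss : bform s s = 0.
  by apply: bvec2_isotropic; rewrite ?partner_eq0 ?partnerK // -eq_partner.
have s0 : s ord0 ord0 = 0 by rewrite bvec2_eq0 // eq_sym partner_eq0.
have sr : s (partner (partner r)) ord0 = 0 by rewrite partnerK bvec2_eq0.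
have tr : t (partner r) ord0 = 0 by rewrite bvec2_eq0.
have tpr : t (partner (partner r)) ord0 = 0 by rewrite partnerK bvec2_eq0.
have spr : s (partner r) ord0 = 0 by rewrite bvec2_eq0.
rewrite (esd_commutator unit2 (f := bvec r) (g := bvec (partner r))) //;
  rewrite ?bvec_isotropic ?bform_bvec_partner ?t_isotropic //;
  rewrite -?[bform t _]bform_sym ?bform_bvecl_neq0 //.
have EO_tr := eo_dir_bvecr r_neq0 t_isotropic t_ord0 tr.
have EO_prs := eo_dir_bvecl pr_neq0 s0 sr.
apply: in_EO_mul (eo_dir_in_EO (eo_dirN EO_prs)).
apply: in_EO_mul (eo_dir_in_EO (eo_dirN EO_tr)).
exact: in_EO_mul (eo_dir_in_EO EO_tr) (eo_dir_in_EO EO_prs).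
Qed.

Lemma esd_bvec2_EO (u : V) : bform u u = 0 -> u ord0 ord0 = 0 ->
  bform u t = 0 -> in_EO (esd u t).
Proof.
move=> uu u0 ut; apply: in_EO_esd_swap => //.
set s := bvec2 (partner a) (partner b) (u (partner a) ord0) (u (partner b) ord0).
have pb_neq_pa : partner b != partner a by rewrite -eq_partner partnerK.
have us_pa : (u - s) (partner a) ord0 = 0.
  by rewrite 2!mxE bvec2E eqxx eq_sym (negbTE pb_neq_pa) mulr1 mulr0 addr0 subrr.
have us_pb : (u - s) (partner b) ord0 = 0.
  by rewrite 2!mxE bvec2E eqxx (negbTE pb_neq_pa) mulr1 mulr0 add0r subrr.
have t_us : bform t (u - s) = 0.
  by rewrite /bvec2 bformDl !bformZl !bform_bvecl_neq0 // us_pa us_pb !mulr0 addr0.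
have ts : bform t s = 0 by rewrite -[s](subKr u) bformBr t_us (bform_sym t) ut subrr.
rewrite -(subrK s u) esdD //.
apply: in_EO_mul; last exact: esd_bvec2_partner_EO.
apply/eo_dir_in_EO/eo_dir_coord => //.
move=> j; have [->|j_neq0] := eqVneq j ord0.
  by left; rewrite 2!mxE u0 bvec2_eq0 ?subrr // eq_sym partner_eq0.
have [->|j_pa] := eqVneq j (partner a); first by left.
have [->|j_pb] := eqVneq j (partner b); first by left.
by right; apply: eo_dir_bvecr; rewrite // bvec2_eq0 // -eq_partner.
Qed.

End PairVectors.

Section Orthogonal.
Variable u : V.
Hypotheses (n_ge3 : (3 <= n)%N) (uu : bform u u = 0) (u0 : u ord0 ord0 = 0).

Definition perp_vec (a k : 'I_N) : V :=
  bform u (bvec k) *: bvec a - bform u (bvec a) *: bvec k.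

Lemma bform_u_bvec0 : bform u (bvec ord0) = 0.
Proof. by rewrite bform_sym bform_bvecl partner0 u0 mulr0. Qed.

Lemma bform_u_bvec k : k != ord0 -> bform u (bvec k) = u (partner k) ord0.
Proof. by move=> k_neq0; rewrite bform_sym bform_bvecl_neq0. Qed.

Lemma perp_vec_diag a : perp_vec a a = 0.
Proof. exact: subrr. Qed.

Lemma perp_vecC a k : perp_vec a k = - perp_vec k a.
Proof. by rewrite /perp_vec opprB. Qed.

Lemma perp_vec_plucker a j k : bform u (bvec j) *: perp_vec a k =
  bform u (bvec k) *: perp_vec a j + bform u (bvec a) *: perp_vec j k.
Proof. by apply/matrixP => ? ?; rewrite !mxE; ring. Qed.

Lemma sum_perp_vec (x : V) a :
  \sum_k x k ord0 *: perp_vec a k = bform u x *: bvec a - bform u (bvec a) *: x.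
Proof.
rewrite (bform_cV_sum u x) [X in _ - _ *: X](cV_sum_bvec x).
rewrite scaler_suml scaler_sumr -sumrB.
apply: eq_bigr => k _; rewrite /perp_vec scalerBr !scalerA.
by rewrite [bform u (bvec a) * _]mulrC.
Qed.

Lemma eo_dir_perp_vec a k : a != ord0 -> k != ord0 -> k != a -> k != partner a ->
  eo_dir u (perp_vec a k).
Proof.
move=> a_neq0 k_neq0 k_neq_a k_neq.
split=> [|c]; first by rewrite bformBr !bformZr mulrC subrr.
rewrite /perp_vec scalerBr !scalerA -scaleNr.
by apply: esd_bvec2_EO; rewrite // /bvec2 bformDr !bformZr; ring.
Qed.

Lemma eo_dir_scaled_perp_vec_partner a : a != ord0 ->
  eo_dir u (bform u (bvec a) *: perp_vec a (partner a)).
Proof.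
move=> a_neq0; have := sum_perp_vec u a.
rewrite uu scale0r sub0r (bigD1 (partner a)) //= -bform_u_bvec ?partnerK // => sum_u.
rewrite -[_ *: _](addrK (\sum_(k | k != partner a) u k ord0 *: perp_vec a k)) sum_u.
apply: eo_dirD => //; first exact/eo_dirN/eo_dirZ/eo_dir_self.
apply/eo_dirN/eo_dir_sum => // k k_neq.
have [->|k_neq0] := eqVneq k ord0; first by rewrite u0 scale0r; apply: eo_dir0.
have [->|k_neq_a] := eqVneq k a; first by rewrite perp_vec_diag scaler0; apply: eo_dir0.
exact/eo_dirZ/eo_dir_perp_vec.
Qed.

Variable w : V.
Hypothesis uw : bform u w = 1.

Lemma eo_dir_perp_vec_partner a : a != ord0 -> eo_dir u (perp_vec a (partner a)).
Proof.
move=> a_neq0; have pa_neq0 : partner a != ord0 by rewrite partner_eq0.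
rewrite -[perp_vec _ _]scale1r -uw bform_cV_sum scaler_suml.
apply: eo_dir_sum => // j _; rewrite -scalerA; apply: eo_dirZ.
have [->|j_neq0] := eqVneq j ord0.
  by rewrite bform_u_bvec0 scale0r; apply: eo_dir0.
have [->|j_neq_a] := eqVneq j a; first exact: eo_dir_scaled_perp_vec_partner.
have [->|j_neq] := eqVneq j (partner a).
  rewrite perp_vecC scalerN; apply/eo_dirN.
  by have := eo_dir_scaled_perp_vec_partner pa_neq0; rewrite partnerK.
rewrite perp_vec_plucker; apply: eo_dirD => //; apply: eo_dirZ.
  exact: eo_dir_perp_vec.
by apply: eo_dir_perp_vec; rewrite // 1?eq_sym // -eq_partner partnerK.
Qed.

Hypothesis w0 : w ord0 ord0 = 0.

Lemma eo_dir_bvec_proj a : a != ord0 -> eo_dir u (bvec a - bform u (bvec a) *: w).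
Proof.
move=> a_neq0; have := sum_perp_vec w a; rewrite uw scale1r => <-.
apply: eo_dir_sum => // k _.
have [->|k_neq0] := eqVneq k ord0; first by rewrite w0 scale0r; apply: eo_dir0.
apply: eo_dirZ.
have [->|k_neq_a] := eqVneq k a; first by rewrite perp_vec_diag; apply: eo_dir0.
have [->|k_neq] := eqVneq k (partner a); first exact: eo_dir_perp_vec_partner.
exact: eo_dir_perp_vec.
Qed.

Lemma eo_dir_orthogonal (v : V) : v ord0 ord0 = 0 -> bform u v = 0 -> eo_dir u v.
Proof.
move=> v0 uv.
have -> : v = \sum_a v a ord0 *: (bvec a - bform u (bvec a) *: w).
  under eq_bigr do rewrite scalerBr scalerA.
  by rewrite sumrB -scaler_suml -cV_sum_bvec -bform_cV_sum uv scale0r subr0.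
apply: eo_dir_sum => // a _.
have [->|a_neq0] := eqVneq a ord0; first by rewrite v0 scale0r; apply: eo_dir0.
exact/eo_dirZ/eo_dir_bvec_proj.
Qed.

End Orthogonal.

End Generation.

Theorem mainTheorem7 (R : comUnitRingType) (n : nat) (u v : 'cV[R]_(n.*2.+1)) :
  (2%:R : R) \is a GRing.unit ->
  (3 <= n)%N ->
  u (ix n 0) ord0 = 0 ->
  v (ix n 0) ord0 = 0 ->
  unimodular u ->
  qform u = 0 ->
  bform u v = 0 ->
  in_EO (esd u v).
Proof.
move=> unit2 n_ge3; rewrite ix0 => u0 v0 unimod_u qu uv.
have uu : bform u u = 0 by rewrite bform_qform qu mulr0.
have [w uw w0] := unimodular_dual u0 unimod_u.
exact/eo_dir_in_EO/(eo_dir_orthogonal unit2 n_ge3 uu u0 uw w0).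
Qed.
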